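(* Let $(X,d)$ be a metric space and let $u,u_1,u_2,\ldots\in F_{USCG}(X)$. Then the following statements are equivalent: (i) $H_{\rm end}(u_n,u)\to0$; (ii) $H([u_n]_\alpha,[u]_\alpha)\to0$ for almost every $\alpha\in(0,1)$ (Lebesgue measure); (iii) $H([u_n]_\alpha,[u]_\alpha)\to0$ for all $\alpha\in(0,1)\setminus P(u)$; (iv) there is a dense subset $P$ of $(0,1)\setminus P(u)$ such that $H([u_n]_\alpha,[u]_\alpha)\to0$ for all $\alpha\in P$; (v) there is a countable dense subset $P$ of $(0,1)\setminus P(u)$ such that $H([u_n]_\alpha,[u]_\alpha)\to0$ for all $\alpha\in P$.
   Context: A fuzzy set on $X$ is a function $u:X\to[0,1]$, with $\alpha$-cuts $[u]_\alpha=\{x: u(x)\ge\alpha\}$ for $\alpha\in(0,1]$ and $[u]_0=\overline{\{u>0\}}$. $F_{USC}(X)$ is the set of fuzzy sets with all $\alpha$-cuts ($\alpha\in[0,1]$) non-empty and closed; $F_{USCG}(X)=\{u\in F_{USC}(X): [u]_\alpha\text{ compact for all }\alpha\in(0,1]\}$. For non-empty closed sets $U,V$ in a metric space $(Y,\rho)$, $H(U,V)=\max\{\sup_{a\in U}\inf_{b\in V}\rho(a,b),\sup_{b\in V}\inf_{a\in U}\rho(a,b)\}$. $X\times[0,1]$ is metrized by $\overline{d}((x,\alpha),(y,\beta))=d(x,y)+|\alpha-\beta|$, ${\rm end}\,u=\{(x,t)\in X\times[0,1]: u(x)\ge t\}$, $H_{\rm end}(u,v)=H({\rm end}\,u,{\rm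 end}\,v)$. A number $\alpha\in(0,1)$ is a platform point of $u$ if $\overline{\{u>\alpha\}}\subsetneqq[u]_\alpha$; $P(u)$ is the set of platform points of $u$. *)

From HB Require Import structures.
From mathcomp Require Import all_boot all_order all_algebra.
From mathcomp Require Import all_classical all_reals all_analysis.
Set Implicit Arguments. Unset Strict Implicit. Unset Printing Implicit Defensive.
Import Order.TTheory GRing.Theory Num.Theory.
Local Open Scope classical_set_scope.
Local Open Scope ring_scope.

Section FuzzyDefs.
Variable R : realType.

Definition is_metric (Y : Type) (rho : Y -> Y -> R) : Prop :=
  [/\ forall x y, 0 <= rho x y,
      forall x y, rho x y = 0 <-> x = y,
      forall x y, rho x y = rho y x &
      forall x y z, rho x z <= rho x y + rho y z].

Section Metric.
Variables (Y : Type) (rho : Y -> Y -> R).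

Definition mball (x : Y) (r : R) : set Y := [set y | rho x y < r].

Definition mopen (A : set Y) : Prop :=
  forall x, A x -> exists2 r : R, 0 < r & mball x r `<=` A.

Definition mclosure (A : set Y) : set Y :=
  [set x | forall e : R, 0 < e -> exists2 y, A y & rho x y < e].

Definition mclosed (A : set Y) : Prop := mclosure A `<=` A.

Definition mcompact (A : set Y) : Prop :=
  forall (I : Type) (U : I -> set Y), (forall i, mopen (U i)) ->
    A `<=` \bigcup_i U i ->
    exists2 F : set I, finite_set F & A `<=` \bigcup_(i in F) U i.

Definition pdist (a : Y) (V : set Y) : \bar R :=
  ereal_inf [set (rho a b)%:E | b in V].

Definition hausdorff (U V : set Y) : \bar R :=
  maxe (ereal_sup [set pdist a V | a in U])
       (ereal_sup [set pdist b U | b in V]).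
End Metric.

Section Fuzzy.
Variables (X : Type) (d : X -> X -> R).

Definition cut (u : X -> R) (a : R) : set X :=
  if a == 0 then mclosure d [set x | 0 < u x] else [set x | a <= u x].

Definition is_fuzzy (u : X -> R) : Prop := forall x, 0 <= u x <= 1.

Definition F_USC (u : X -> R) : Prop :=
  is_fuzzy u /\
  forall a : R, 0 <= a <= 1 -> cut u a !=set0 /\ mclosed d (cut u a).

Definition F_USCG (u : X -> R) : Prop :=
  F_USC u /\ forall a : R, 0 < a <= 1 -> mcompact d (cut u a).

Definition dbar (p q : X * R) : R := d p.1 q.1 + `|p.2 - q.2|.

Definition endo (u : X -> R) : set (X * R) :=
  [set p | 0 <= p.2 <= 1 /\ p.2 <= u p.1].

Definition Hend (u v : X -> R) : \bar R := hausdorff dbar (endo u) (endo v).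

Definition platform (u : X -> R) : set R :=
  [set a | 0 < a < 1 /\
     mclosure d [set x | a < u x] `<=` cut u a /\
     mclosure d [set x | a < u x] <> cut u a].

Definition cut_cvg (us : nat -> X -> R) (u : X -> R) (a : R) : Prop :=
  (fun n => hausdorff d (cut (us n) a) (cut u a)) @ \oo --> 0%E.

Definition dense_in (P Y : set R) : Prop :=
  forall y, Y y -> forall e : R, 0 < e -> exists2 p, P p & `|p - y| < e.
End Fuzzy.
End FuzzyDefs.

From Pilot Require Import Defs.
From HB Require Import structures.
From mathcomp Require Import all_boot all_order all_algebra.
From mathcomp Require Import all_classical all_reals all_analysis.
From mathcomp Require Import lra.
Import Order.TTheory GRing.Theory Num.Theory.
Local Open Scope classical_set_scope.
Local Open Scope ring_scope.

Set Implicit Arguments. Unset Strict Implicit.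

(* The cut map a |-> [u]_a of u in F_USCG(X) is continuous for the Hausdorff
   distance from the left at every level, and from the right at every level
   that is not a platform point; both follow from compactness of the cuts.
   A platform point a has a witness x with u x = a at positive distance from
   [u > a]; witnesses of distinct levels >= c with isolation radius >= r are
   r-apart inside the compact c-cut, so P(u) is countable, hence null.
   If H_end(u_n, u) < δ, every point of [u_n]_a is δ-close to [u]_(a - δ) and
   every point of [u]_(a + δ) is δ-close to [u_n]_a, so continuity of the cut
   map at a gives (i) => (iii).  Conversely, if the cuts converge at finitely
   many levels forming an h-net of [0, 1], each point of either endograph is
   eventually 3h-close to the other, which gives (v) => (i).  The other
   implications only use that P(u) is null and that every set of reals has a
   countable dense subset. *)

Section MetricSpace.
Variables (R : realType) (Y : Type) (rho : Y -> Y -> R).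
Hypothesis rho_metric : is_metric rho.

Lemma metric_ge0 a b : 0 <= rho a b. Proof. by case: rho_metric. Qed.
Lemma metricxx a : rho a a = 0. Proof. by case: rho_metric => _ h _ _; apply/h. Qed.
Lemma metricC a b : rho a b = rho b a. Proof. by case: rho_metric. Qed.
Lemma ler_metricD a b c : rho a c <= rho a b + rho b c.
Proof. by case: rho_metric. Qed.

Lemma pdist_ge0 a V : (0 <= pdist rho a V)%E.
Proof. by apply: le_ereal_inf_tmp => _ [b Vb <-]; rewrite lee_fin metric_ge0. Qed.

Lemma pdist_le a V b : V b -> (pdist rho a V <= (rho a b)%:E)%E.
Proof. by move=> Vb; apply: ereal_inf_lbound; exists b. Qed.

Lemma pdist_lt a V (e : R) :
  (pdist rho a V < e%:E)%E -> exists2 b, V b & rho a b < e.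
Proof. by move=> /ereal_inf_lt [_ [b Vb <-]]; rewrite lte_fin; exists b. Qed.

Lemma hausdorffC U V : hausdorff rho U V = hausdorff rho V U.
Proof. exact: maxC. Qed.

Lemma hausdorff_ge0 U V : U !=set0 -> (0 <= hausdorff rho U V)%E.
Proof.
move=> [a Ua]; rewrite le_max (le_trans (pdist_ge0 a V)) //.
by apply: ereal_sup_ubound; exists a.
Qed.

Lemma hausdorff_le U V (e : R) :
  (forall a, U a -> exists2 b, V b & rho a b <= e) ->
  (forall b, V b -> exists2 a, U a & rho b a <= e) ->
  (hausdorff rho U V <= e%:E)%E.
Proof.
move=> UV VU; rewrite ge_max; apply/andP; split; apply: ge_ereal_sup.
  move=> _ [a Ua <-]; have [b Vb ab] := UV a Ua.
  by apply: le_trans (pdist_le _ Vb) _; rewrite lee_fin.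
move=> _ [b Vb <-]; have [a Ua ba] := VU b Vb.
by apply: le_trans (pdist_le _ Ua) _; rewrite lee_fin.
Qed.

Lemma hausdorff_lt U V (e : R) : (hausdorff rho U V < e%:E)%E ->
  forall a, U a -> exists2 b, V b & rho a b < e.
Proof.
move=> UVe a Ua; apply: pdist_lt; apply: le_lt_trans UVe.
by rewrite le_max ereal_sup_ubound //; exists a.
Qed.

Lemma mopen_mball x (r : R) : mopen rho (mball rho x r).
Proof.
move=> y xy; exists (r - rho x y); first by rewrite subr_gt0.
move=> z yz; have := ler_metricD x y z; rewrite /mball /= in xy yz *; lra.
Qed.

Lemma mopen_thickening (A : set Y) (r : R) :
  mopen rho [set y | exists2 z, A z & rho z y < r].
Proof.
move=> x [z Az zx]; exists (r - rho z x); first by rewrite subr_gt0.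
move=> y xy; exists z => //; have := ler_metricD z x y; rewrite /mball /= in xy; lra.
Qed.

Lemma mopenU (A B : set Y) : mopen rho A -> mopen rho B -> mopen rho (A `|` B).
Proof.
by move=> oA oB x [/oA|/oB] [r r0 rA]; exists r => // y /rA; [left|right].
Qed.

Lemma mopenC (A : set Y) : mclosed rho A -> mopen rho (~` A).
Proof.
move=> cA x nAx; have /existsNP [e /not_implyP [e0 /forall2NP far]] : ~ mclosure rho A x.
  by move=> /cA.
by exists e => // y xy Ay; case: (far y).
Qed.

Lemma mcompact_nondecreasing_cover (K : set Y) (W : nat -> set Y) :
  mcompact rho K -> (forall m, mopen rho (W m)) ->
  (forall m n, (m <= n)%N -> W m `<=` W n) ->
  K `<=` \bigcup_m W m -> exists M, K `<=` W M.
Proof.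
move=> cK oW W_nd KW; have [F fF KF] := cK nat W oW KW.
have [B FB] := (@finite_fsetP _ F).1 fF.
exists (\max_(i <- finmap.enum_fset B) i)%N => y /KF [i Fi Wy].
by apply: W_nd Wy; apply: leq_bigmax_seq => //; rewrite FB in Fi.
Qed.

(* Cover [K] by the balls of radius [r / 2]: each ball carries at most one [f i]. *)
Lemma mcompact_separated_finite (I : Type) (K : set Y) (A : set I) (f : I -> Y)
    (r : R) : mcompact rho K -> 0 < r -> f @` A `<=` K ->
  (forall i j, A i -> A j -> i <> j -> r <= rho (f i) (f j)) -> finite_set A.
Proof.
move=> cK r0 AK Asep.
have [|F fF KF] := cK _ (fun z => mball rho z (r / 2)) (fun z => @mopen_mball z (r / 2)).
  by move=> y _; exists y => //; rewrite /mball /= metricxx divr_gt0.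
pose B z := [set i | A i /\ rho z (f i) < r / 2].
apply: (@sub_finite_set _ _ (\bigcup_(z in F) B z)).
  by move=> i Ai; have [z Fz zi] := KF _ (AK _ (imageP f Ai)); exists z.
apply: bigcup_finite => // z _.
have [[i [Ai zi]]|/nonemptyPn->] := pselect (B z !=set0); last exact: finite_set0.
apply: (@sub_finite_set _ _ [set i]); last exact: finite_set1.
move=> j [Aj zj]; apply: contrapT => ji; have := Asep _ _ Aj Ai ji.
have := ler_metricD (f j) z (f i); rewrite (metricC (f j) z); lra.
Qed.
End MetricSpace.

Lemma nonneg_cvge0P (R : realType) (f : nat -> \bar R) : (forall n, (0 <= f n)%E) ->
  f @ \oo --> 0%E <-> forall e : R, 0 < e -> \forall n \near \oo, (f n <= e%:E)%E.
Proof.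
move=> f0; rewrite fine_cvgP; split.
  move=> [f_fin /cvgrPdist_le f_cvg] e e0; near=> n.
  have fn : f n \is a fin_num by near: n.
  have : `|0 - fine (f n)| <= e by near: n; exact: f_cvg.
  by rewrite sub0r normrN -(fineK fn) lee_fin => /(le_trans (ler_norm _)).
move=> fe; split.
  near=> n; have : (f n <= 1%:E)%E by near: n; exact: fe.
  by have := f0 n; case: (f n).
apply/cvgrPdist_le => e e0; near=> n.
have : (f n <= e%:E)%E by near: n; exact: fe.
rewrite /=; have := f0 n; case: (f n) => //= r; rewrite !lee_fin sub0r normrN => r0 re.
by rewrite ger0_norm.
Unshelve. all: by end_near.
Qed.

Section RealLine.
Variable R : realType.

Lemma lebesgue_null_itvoo_avoid (N : set R) :
  measurable N -> (@lebesgue_measure R) N = 0%E ->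
  forall a b : R, a < b -> exists2 p, a < p < b & ~ N p.
Proof.
move=> mN N0 a b ab; apply: contrapT => N_itv.
have abN : `]a, b[%classic `<=` N.
  move=> p; rewrite /= in_itv /= => abp; apply: contrapT => Np.
  by apply: N_itv; exists p.
have : ((@lebesgue_measure R) `]a, b[%classic <= (@lebesgue_measure R) N)%E.
  by apply: le_measure => //; rewrite inE //; exact: measurable_itv.
rewrite N0 lebesgue_measure_itv /= lte_fin ab -EFinD lee_fin subr_le0.
by rewrite leNgt ab.
Qed.

Lemma dense_in_co_null (N : set R) : measurable N -> (@lebesgue_measure R) N = 0%E ->
  dense_in (`]0, 1[ `\` N) `]0, 1[.
Proof.
move=> mN N0 y; rewrite /= in_itv /= => /andP[y0 y1] e e0.
have [|p /andP[lo hi] Np] := lebesgue_null_itvoo_avoid mN N0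
    (a := Num.max 0 (y - e)) (b := Num.min 1 (y + e)).
  by rewrite gt_max !lt_min; apply/andP; split; apply/andP; split; lra.
move: lo hi; rewrite gt_max lt_min => /andP[p0 yp] /andP[p1 py].
exists p; first by split => //; rewrite /= in_itv /= p0 p1.
by rewrite ltr_norml; apply/andP; split; lra.
Qed.

Lemma ae_itvoo_dense (Q : R -> Prop) (N : set R) :
  measurable N -> (@lebesgue_measure R) N = 0%E ->
  {ae @lebesgue_measure R, forall a, `]0, 1[%classic a -> Q a} ->
  dense_in [set a | (`]0, 1[ `\` N) a /\ Q a] (`]0, 1[ `\` N).
Proof.
move=> mN N0 [M [mM M0 QM]] y [y01 _] e e0.
have MN0 : (@lebesgue_measure R) (M `|` N) = 0%E.
  apply/eqP; rewrite eq_le measure_ge0 andbT.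
  apply: le_trans (measureU2 _ mM mN) _.
  rewrite [X in (X + _ <= _)%E](_ : _ = 0%E); last exact: M0.
  by rewrite [X in (_ + X <= _)%E](_ : _ = 0%E) ?adde0; last exact: N0.
have [p [p01 MNp] yp] := dense_in_co_null (measurableU _ _ mM mN) MN0 y01 e0.
exists p => //; split; first by split => // Np; apply: MNp; right.
by apply: contrapT => nQp; apply: MNp; left; apply: QM => /(_ p01).
Qed.

Lemma dense_in_trans (P Q Y : set R) :
  dense_in P Q -> dense_in Q Y -> dense_in P Y.
Proof.
move=> PQ QY y Yy e e0.
have [q Qq qy] := QY y Yy _ (divr_gt0 e0 (ltr0Sn _ 1)).
have [p Pp pq] := PQ q Qq _ (divr_gt0 e0 (ltr0Sn _ 1)).
exists p => //; have := ler_distD q p y; lra.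
Qed.

(* One point of [P] in each ball with rational center and radius that meets [P]. *)
Lemma countable_dense_subset (P : set R) :
  exists Q, [/\ countable Q, Q `<=` P & dense_in Q P].
Proof.
pose S (qr : rat * rat) := [set p | P p /\ `|p - ratr qr.1| < ratr qr.2].
exists [set xget 0 (S qr) | qr in [set qr | S qr !=set0]]; split.
- by apply: sub_countable (card_image_le _ _) _; exact: countableP.
- by move=> _ [qr Sqr <-]; have [] := xgetPex 0 Sqr.
move=> y Py e e0.
have [r] := rat_in_itvoo (divr_gt0 e0 (ltr0Sn _ 1)); rewrite in_itv /= => /andP[r0 re].
have yr : y - ratr r < y + ratr r by lra.
have [q] := rat_in_itvoo yr; rewrite in_itv /= => /andP[yq qy].
have Sy : S (q, r) y by split => //=; rewrite ltr_norml; apply/andP; split; lra.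
have [Pg gq] := xgetI 0 Sy.
exists (xget 0 (S (q, r))); first by exists (q, r) => //; exists y.
have := ler_distD (ratr q) (xget 0 (S (q, r))) y.
have : `|ratr q - y| < ratr r by rewrite ltr_norml; apply/andP; split; lra.
lra.
Qed.

Lemma unit_itv_grid (P : set R) (N : nat) : dense_in P `]0, 1[ ->
  exists p : 'I_N.+1 -> R, (forall k, P (p k)) /\
    forall t, N.+1%:R^-1 <= t <= 1 -> exists k, p k <= t < p k + 2 / N.+1%:R.
Proof.
move=> P_dense; set h : R := N.+1%:R^-1.
have h0 : 0 < h by rewrite invr_gt0 ltr0n.
have Nh : N.+1%:R * h = 1 by rewrite mulfV // pnatr_eq0.
have grid (k : 'I_N.+1) : exists pk, P pk /\ k%:R * h < pk < k.+1%:R * h.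
  have kSh : k.+1%:R * h = k%:R * h + h by rewrite -natr1 mulrDl mul1r.
  have kN : k%:R * h + h <= 1.
    by rewrite -kSh -[leRHS]Nh ler_pM2r // ler_nat; exact: ltn_ord.
  have k0 : 0 <= k%:R * h by rewrite mulr_ge0 // ltW.
  have mid01 : `]0, 1[%classic (k%:R * h + h / 2).
    by rewrite /= in_itv /=; apply/andP; split; lra.
  have h20 : 0 < h / 2 by lra.
  have [pk Ppk] := P_dense _ mid01 _ h20; rewrite ltr_norml => /andP[lo hi].
  by exists pk; rewrite kSh; split => //; apply/andP; split; lra.
have [p hp] := choice grid.
exists p; split=> [k|t /andP[ht t1]]; first by case: (hp k).
have th0 : 0 <= t / h by rewrite divr_ge0 // ltW // (lt_le_trans h0).
set j := Num.truncn (t / h); have /andP[jt tj] := truncn_itv th0.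
have j0 : (0 < j)%N by rewrite truncn_gt0 ler_pdivlMr // mul1r.
rewrite ler_pdivlMr // in jt; rewrite ltr_pdivrMr // in tj.
have jN : (j.-1 < N.+1)%N.
  by rewrite -ltnS prednK // ltnS -(ler_nat R) -(ler_pM2r h0) Nh; lra.
exists (Ordinal jN); have [_ /andP[lo hi]] := hp (Ordinal jN).
rewrite /= prednK // in hi; rewrite /= in lo.
have Jj : j%:R = j.-1%:R + 1 :> R by rewrite natr1 prednK.
rewrite -/j -natr1 Jj in tj; rewrite -/j Jj in jt; rewrite Jj in hi.
move: lo hi jt tj; move: (j.-1%:R : R) => J *; apply/andP; split; lra.
Qed.
End RealLine.

Section FuzzySet.
Variables (R : realType) (X : Type) (d : X -> X -> R).
Hypothesis d_metric : is_metric d.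
Variable u : X -> R.
Hypothesis u_uscg : F_USCG d u.

Lemma fuzzy_ge0 x : 0 <= u x.
Proof. by case: u_uscg => [[u01 _] _]; case/andP: (u01 x). Qed.

Lemma fuzzy_le1 x : u x <= 1.
Proof. by case: u_uscg => [[u01 _] _]; case/andP: (u01 x). Qed.

(* [Defs.cut] is qualified: mathcomp-analysis also defines [cut] (Dedekind cuts). *)
Lemma cutE (a : R) : 0 < a -> Defs.cut d u a = [set x | a <= u x].
Proof. by move=> a0; rewrite /Defs.cut gt_eqF. Qed.

Lemma cut_closed (a : R) : 0 < a <= 1 -> mclosed d [set x | a <= u x].
Proof.
move=> /andP[a0 a1]; case: u_uscg => [[_ ucut] _].
by have [_] := ucut a (introT andP (conj (ltW a0) a1)); rewrite cutE.
Qed.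

Lemma cut_compact (a : R) : 0 < a <= 1 -> mcompact d [set x | a <= u x].
Proof.
by move=> /andP[a0 a1]; case: u_uscg => _ ucut; rewrite -cutE //; apply: ucut; rewrite a0.
Qed.

Lemma cut_nonempty (a : R) : 0 < a <= 1 -> [set x | a <= u x] !=set0.
Proof.
move=> /andP[a0 a1]; case: u_uscg => [[_ ucut] _].
by have [] := ucut a (introT andP (conj (ltW a0) a1)); rewrite cutE.
Qed.

Lemma mopen_sublevel (c : R) : mopen d [set x | u x < c].
Proof.
move=> x /= xc; have [c0|c0] := leP c 0; first by have := fuzzy_ge0 x; lra.
have [c1|c1] := leP c 1; last by exists 1 => // y _ /=; have := fuzzy_le1 y; lra.
have [|r r0 rc] := mopenC (cut_closed (introT andP (conj c0 c1))) (x := x).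
  by move=> /=; lra.
by exists r => // y /rc /=; rewrite ltNge => /negP.
Qed.

Lemma cut_approx_below (a e : R) : 0 < a <= 1 -> 0 < e ->
  exists2 b, 0 < b < a & forall x, b <= u x -> exists2 z, a <= u z & d x z < e.
Proof.
move=> /andP[a0 a1] e0.
pose W m := [set y | exists2 z, a <= u z & d z y < e] `|`
            [set x | u x < a - m.+1%:R^-1].
have [M cutW] : exists M, [set x | a / 2 <= u x] `<=` W M.
  apply: (mcompact_nondecreasing_cover (cut_compact _)); first by apply/andP; lra.
  - by move=> m; apply: mopenU; [exact: mopen_thickening | exact: mopen_sublevel].
  - move=> m n mn x [|/= xm]; [by left | right => /=].
    by apply: lt_le_trans xm _; rewrite lerD2l lerN2 lef_pV2 ?posrE ?ler_nat.
  move=> x _; have [ax|xa] := leP a (u x).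
    by exists 0%N => //; left; exists x => //; rewrite (metricxx d_metric).
  by have [k xk] := ltr_add_invr xa; exists k => //; right; rewrite /= ltrBrDr.
exists (Num.max (a / 2) (a - M.+1%:R^-1)).
  have a2 : 0 < a / 2 by lra.
  by rewrite lt_max a2 /= gt_max ltrBlDr ltrDl invr_gt0 ltr0n andbT; lra.
move=> x; rewrite ge_max => /andP[ax xM].
have [[z az zx]|/=] := cutW x ax; last by rewrite ltNge xM.
by exists z => //; rewrite (metricC d_metric).
Qed.

Lemma cut_sub_closure_gt (a : R) : 0 < a < 1 -> ~ platform d u a ->
  [set x | a <= u x] `<=` mclosure d [set x | a < u x].
Proof.
move=> a01 Pa x ax; apply: contrapT => nx; apply: Pa; split => //.
have /andP[a0 a1] := a01; rewrite cutE //; split => [y ya|cl_cut].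
  apply: (cut_closed (introT andP (conj a0 (ltW a1)))) => e e0.
  by have [z az yz] := ya e e0; exists z => //; exact: ltW.
by apply: nx; rewrite cl_cut.
Qed.

Lemma cut_approx_above (a e : R) : 0 < a < 1 -> ~ platform d u a -> 0 < e ->
  exists2 b, a < b <= 1 & forall y, a <= u y -> exists2 z, b <= u z & d y z < e.
Proof.
move=> a01 Pa e0; have /andP[a0 a1] := a01.
pose W m := [set y | exists2 z, a + m.+1%:R^-1 < u z & d z y < e].
have [M cutW] : exists M, [set x | a <= u x] `<=` W M.
  apply: (mcompact_nondecreasing_cover (cut_compact _)); first by apply/andP; lra.
  - by move=> m; exact: mopen_thickening.
  - move=> m n mn x [z /= zm zx]; exists z => //=; apply: le_lt_trans zm.
    by rewrite lerD2l lef_pV2 ?posrE ?ler_nat.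
  move=> y ay; have [z az yz] := cut_sub_closure_gt a01 Pa ay e0.
  have [k zk] := ltr_add_invr az.
  by exists k => //; exists z; rewrite // (metricC d_metric).
exists (a + M.+1%:R^-1).
  have [y ay] := cut_nonempty (introT andP (conj a0 (ltW a1))).
  have [z /= zM _] := cutW y ay.
  by rewrite ltrDl invr_gt0 ltr0n /= (ltW (lt_le_trans zM (fuzzy_le1 z))).
move=> y ay; have [z /= zM zy] := cutW y ay.
by exists z; [exact: ltW | rewrite (metricC d_metric)].
Qed.

Lemma platform_isolated (a : R) : platform d u a -> exists x (r : R),
  [/\ 0 < r, u x = a & forall y, a < u y -> r <= d x y].
Proof.
move=> [/andP[a0 a1] []]; rewrite cutE // => cl_cut cl_neq.
have [x ax nx] : exists2 x, a <= u x & ~ mclosure d [set x | a < u x] x.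
  apply: contrapT => cut_cl; apply: cl_neq; apply/seteqP; split => // x ax.
  by apply: contrapT => nx; apply: cut_cl; exists x.
move: nx => /existsNP [r /not_implyP [r0 /forall2NP far]].
have rx y : a < u y -> r <= d x y.
  by move=> ay; case: (far y) => // /negP; rewrite -leNgt.
exists x, r; split => //; apply/eqP; rewrite eq_le ax andbT leNgt.
by apply/negP => xa; have := rx x xa; rewrite (metricxx d_metric); lra.
Qed.

(* Isolating witnesses of distinct levels [a < b] are [r]-apart, since [u] exceeds
   [a] at the witness of [b]. *)
Lemma isolated_levels_finite (c r : R) : 0 < c <= 1 -> 0 < r ->
  finite_set [set a | c <= a /\ exists x, u x = a /\ forall y, a < u y -> r <= d x y].
Proof.
move=> c01 r0; set S := [set a | _].
have [x0 _] := cut_nonempty c01.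
have witness (a : R) : exists x, S a ->
    u x = a /\ forall y, a < u y -> r <= d x y.
  by have [[_ [x ax]]|nSa] := pselect (S a); [exists x | exists x0].
have [w Sw] := choice witness.
apply: (mcompact_separated_finite d_metric (cut_compact c01) r0 (f := w)).
  by move=> _ [a Sa <-] /=; have [-> _] := Sw a Sa; case: Sa.
move=> a b Sa Sb ab; have [wa wa_iso] := Sw a Sa; have [wb wb_iso] := Sw b Sb.
have [lt_ab|lt_ba|] := ltgtP a b; last by [].
  by apply: wa_iso; rewrite wb.
by rewrite (metricC d_metric); apply: wb_iso; rewrite wa.
Qed.

Lemma platform_countable : countable (platform d u).
Proof.
pose S (jk : nat * nat) := [set a | jk.1.+1%:R^-1 <= a /\ exists x, u x = a /\
  forall y, a < u y -> jk.2.+1%:R^-1 <= d x y].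
apply: (@sub_countable _ _ _ (\bigcup_(jk in [set: nat * nat]) S jk)).
  apply: subset_card_le => a Pa; have [x [r [r0 uxa x_iso]]] := platform_isolated Pa.
  have [/andP[a0 _] _] := Pa.
  have [j ja] := ltr_add_invr a0; have [k kr] := ltr_add_invr r0.
  rewrite add0r in ja; rewrite add0r in kr.
  exists (j, k) => //; split; first exact: (ltW ja).
  by exists x; split => // y ay; exact: le_trans (ltW kr) (x_iso y ay).
apply: bigcup_countable; first exact: countableP.
move=> [j k] _; apply/finite_set_countable/isolated_levels_finite.
  by rewrite invr_gt0 ltr0n invf_le1 ?ltr0n // ler1n.
by rewrite invr_gt0 ltr0n.
Qed.
Lemma platform_measurable : measurable (platform d u).
Proof. exact: countable_measurable (@measurable_set1 R) platform_countable. Qed.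

Lemma platform_null : (@lebesgue_measure R) (platform d u) = 0%E.
Proof. exact: countable_lebesgue_measure0 platform_countable. Qed.
End FuzzySet.

Section Endograph.
Variables (R : realType) (X : Type) (d : X -> X -> R).
Hypothesis d_metric : is_metric d.

Lemma dbar_metric : is_metric (dbar d).
Proof.
rewrite /dbar; split.
- by move=> p q; rewrite addr_ge0 // metric_ge0.
- move=> [x a] [y b] /=; split; last first.
    by case=> -> ->; rewrite (metricxx d_metric) subrr normr0 addr0.
  move=> dxy_ab; have := metric_ge0 d_metric x y; have := normr_ge0 (a - b).
  move=> ab0 dxy0; have [_ dmetric0 _ _] := d_metric.
  rewrite (dmetric0 x y).1; last by lra.
  have /eqP : `|a - b| = 0 by lra.
  by rewrite normr_eq0 subr_eq0 => /eqP ->.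
- by move=> p q; rewrite (metricC d_metric) distrC.
- move=> p q r; have := ler_metricD d_metric p.1 q.1 r.1.
  have := ler_distD q.2 p.2 r.2; lra.
Qed.

Lemma endo_level0 (v : X -> R) x : F_USCG d v -> endo v (x, 0).
Proof. by move=> v_uscg; split => /=; [rewrite lexx ler01 | exact: fuzzy_ge0 v_uscg x]. Qed.

Lemma Hend_ge0 (v w : X -> R) : F_USCG d v -> (0 <= Hend d v w)%E.
Proof.
move=> v_uscg; apply: (hausdorff_ge0 dbar_metric).
have [x _] := cut_nonempty v_uscg (introT andP (conj (@ltr01 R) (lexx 1))).
by exists (x, 0); exact: endo_level0.
Qed.

Lemma Hend_lt_cut_approx (v w : X -> R) (a δ : R) x : 0 <= a <= 1 ->
  (Hend d v w < δ%:E)%E -> a <= v x -> exists2 y, a - δ < w y & d x y < δ.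
Proof.
move=> a01 vw ax.
have [[y t] [_ /= ty]] := hausdorff_lt vw (a := (x, a)) (conj a01 ax).
rewrite /dbar /= => xy; have := ler_norm (a - t); have := normr_ge0 (a - t).
by exists y => /=; have := metric_ge0 d_metric x y; lra.
Qed.

Lemma cut_cvgE (u : X -> R) (us : nat -> X -> R) (a : R) :
  F_USCG d u -> (forall n, F_USCG d (us n)) -> 0 < a <= 1 ->
  cut_cvg d us u a <-> forall e : R, 0 < e -> \forall n \near \oo,
    (hausdorff d [set x | (a <= us n x)%R] [set x | (a <= u x)%R] <= e%:E)%E.
Proof.
move=> u_uscg us_uscg a01; have /andP[a0 _] := a01.
rewrite /cut_cvg (cutE d u a0); under eq_fun => n do rewrite (cutE d (us n) a0).
apply: nonneg_cvge0P => n; apply: (hausdorff_ge0 d_metric).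
by have := cut_nonempty (us_uscg n) a01.
Qed.

Lemma endo_approx_by_cuts (v w : X -> R) (K : nat) (p : 'I_K -> R) (h : R) :
  F_USCG d w -> 0 < h -> (forall k, 0 < p k <= 1) ->
  (forall t, h <= t <= 1 -> exists k, p k <= t < p k + 2 * h) ->
  (forall k, (hausdorff d [set x | (p k <= v x)%R] [set x | (p k <= w x)%R] < h%:E)%E) ->
  forall q, endo v q -> exists2 q', endo w q' & dbar d q q' <= 3 * h.
Proof.
move=> w_uscg h0 p01 p_grid vw [x t] [/andP[t0 t1] /= tx].
have [th|ht] := ltP t h.
  exists (x, 0); first exact: endo_level0.
  by rewrite /dbar /= (metricxx d_metric) subr0 ger0_norm // add0r; lra.
have [k /andP[pt tp]] := p_grid t (introT andP (conj ht t1)).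
have /andP[pk0 pk1] := p01 k.
have [y ky xy] := hausdorff_lt (vw k) (a := x) (le_trans pt tx).
exists (y, p k); first by split => //=; rewrite (ltW pk0) pk1.
by rewrite /dbar /= ger0_norm; lra.
Qed.
End Endograph.

Section Convergence.
Variables (R : realType) (X : Type) (d : X -> X -> R).
Hypothesis d_metric : is_metric d.
Variables (u : X -> R) (us : nat -> X -> R).
Hypothesis u_uscg : F_USCG d u.
Hypothesis us_uscg : forall n, F_USCG d (us n).

Let Hend_us_ge0 n : (0 <= Hend d (us n) u)%E := Hend_ge0 d_metric u (us_uscg n).

Lemma Hend_cvg_cut_cvg : (fun n => Hend d (us n) u) @ \oo --> 0%E ->
  forall a, (`]0, 1[ `\` platform d u) a -> cut_cvg d us u a.
Proof.
move=> Hcvg a [+ Pa]; rewrite /= in_itv /= => a_itv; have /andP[a0 a1] := a_itv.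
have a01 : 0 < a <= 1 by rewrite a0 ltW.
apply/(cut_cvgE d_metric u_uscg us_uscg a01) => e e0.
have e20 : 0 < e / 2 by lra.
have [bL /andP[_ bLa] below] := cut_approx_below d_metric u_uscg a01 e20.
have [bR /andP[abR bR1] above] := cut_approx_above d_metric u_uscg a_itv Pa e20.
pose δ := Num.min (Num.min (a - bL) (bR - a)) (e / 2).
have [δL δR δe] : [/\ δ <= a - bL, δ <= bR - a & δ <= e / 2].
  by rewrite /δ !ge_min !lexx !orbT.
have δ0 : 0 < δ by rewrite !lt_min !subr_gt0 bLa abR e20.
have δ20 : 0 < δ / 2 by lra.
have a_unit : 0 <= a <= 1 by rewrite (ltW a0) (ltW a1).
have bR_unit : 0 <= bR <= 1 by apply/andP; split; lra.
near=> n.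
have Hn : (Hend d (us n) u < δ%:E)%E.
  apply: le_lt_trans (_ : (δ / 2)%:E < δ%:E)%E; last by rewrite lte_fin; lra.
  by near: n; exact: (nonneg_cvge0P Hend_us_ge0).1 Hcvg _ δ20.
have Hn' : (Hend d u (us n) < δ%:E)%E by rewrite /Hend hausdorffC.
apply: hausdorff_le => [x ax | y ay].
- have [y uy xy] := Hend_lt_cut_approx d_metric a_unit Hn ax.
  have [|z az yz] := below y; first lra.
  by exists z => //; have := ler_metricD d_metric x y z; lra.
- have [z bz yz] := above y ay.
  have [x ux zx] := Hend_lt_cut_approx d_metric bR_unit Hn' bz.
  by exists x; [rewrite /=; lra | have := ler_metricD d_metric y z x; lra].
Unshelve. all: by end_near.
Qed.

Lemma cut_cvg_Hend_cvg (P : set R) : P `<=` `]0, 1[%classic ->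
  dense_in P `]0, 1[ -> (forall a, P a -> cut_cvg d us u a) ->
  (fun n => Hend d (us n) u) @ \oo --> 0%E.
Proof.
move=> P01 P_dense Pcvg.
apply/(nonneg_cvge0P Hend_us_ge0) => e e0.
have [N Ne] : exists N : nat, 3 * N.+1%:R^-1 <= e.
  have e3 : 0 < e / 3 by lra.
  have [N] := ltr_add_invr e3; rewrite add0r => Ne3.
  by exists N; rewrite mulrC -ler_pdivlMr // ltW.
have [p [Pp p_grid]] := unit_itv_grid N P_dense.
set h : R := N.+1%:R^-1 in Ne p_grid.
have h0 : 0 < h by rewrite invr_gt0 ltr0n.
have p01 k : 0 < p k <= 1.
  by have := P01 _ (Pp k); rewrite /= in_itv /= => /andP[-> /ltW].
have cut_near : \forall n \near \oo, forall k,
    (hausdorff d [set x | (p k <= us n x)%R] [set x | (p k <= u x)%R] < h%:E)%E.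
  apply: filter_forall => k; have h20 : 0 < h / 2 by lra.
  have := (cut_cvgE d_metric u_uscg us_uscg (p01 k)).1 (Pcvg _ (Pp k)) _ h20.
  by apply: filterS => n /le_lt_trans; apply; rewrite lte_fin; lra.
near=> n.
have cut_n : forall k,
    (hausdorff d [set x | (p k <= us n x)%R] [set x | (p k <= u x)%R] < h%:E)%E.
  by near: n; exact: cut_near.
have cut_n' k :
    (hausdorff d [set x | (p k <= u x)%R] [set x | (p k <= us n x)%R] < h%:E)%E.
  by rewrite hausdorffC; exact: cut_n.
apply: le_trans (_ : (3 * h)%:E <= e%:E)%E; last by rewrite lee_fin.
apply: hausdorff_le => q endq.
- exact (endo_approx_by_cuts d_metric u_uscg h0 p01 p_grid cut_n endq).
- exact (endo_approx_by_cuts d_metric (us_uscg n) h0 p01 p_grid cut_n' endq).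
Unshelve. all: by end_near.
Qed.
Lemma nonplatform_cut_cvg_Hend_cvg (P : set R) : P `<=` `]0, 1[ `\` platform d u ->
  dense_in P (`]0, 1[ `\` platform d u) -> (forall a, P a -> cut_cvg d us u a) ->
  (fun n => Hend d (us n) u) @ \oo --> 0%E.
Proof.
move=> PS P_dense; apply: cut_cvg_Hend_cvg; first by move=> a /PS [].
exact: dense_in_trans P_dense
  (dense_in_co_null (platform_measurable d_metric u_uscg) (platform_null d_metric u_uscg)).
Qed.
End Convergence.

Theorem theorem4p6 (R : realType) (X : Type) (d : X -> X -> R)
  (hd : is_metric d) (u : X -> R) (us : nat -> X -> R)
  (hu : F_USCG d u) (hus : forall n, F_USCG d (us n)) :
  [<-> (fun n => Hend d (us n) u) @ \oo --> 0%E;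
       {ae (@lebesgue_measure R), forall a, `]0, 1[%classic a -> cut_cvg d us u a};
       forall a, (`]0, 1[ `\` platform d u) a -> cut_cvg d us u a;
       exists P : set R, [/\ P `<=` `]0, 1[ `\` platform d u,
           dense_in P (`]0, 1[ `\` platform d u) &
           forall a, P a -> cut_cvg d us u a];
       exists P : set R, [/\ countable P, P `<=` `]0, 1[ `\` platform d u,
           dense_in P (`]0, 1[ `\` platform d u) &
           forall a, P a -> cut_cvg d us u a]].
Proof.
have plat_meas := platform_measurable hd hu.
have plat_null := platform_null hd hu.
have i_iii := Hend_cvg_cut_cvg hd hu hus.
have v_i := nonplatform_cut_cvg_Hend_cvg hd hu hus.
tfae.
- move=> /i_iii iii; exists (platform d u); split => // a /= nPa.
  by apply: contrapT => Pa; apply: nPa => a01; exact: iii.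
- move=> ii; apply/i_iii/(v_i [set a | (`]0, 1[ `\` platform d u) a /\ cut_cvg d us u a]).
  + by move=> a [].
  + exact: ae_itvoo_dense plat_meas plat_null ii.
  + by move=> a [].
- move=> iii; exists (`]0, 1[ `\` platform d u); split => // y Yy e e0.
  by exists y; rewrite // subrr normr0.
- move=> [P [PS P_dense Pcvg]]; have [Q [cQ QP Q_dense]] := countable_dense_subset P.
  exists Q; split => // [a /QP/PS // | | a /QP/Pcvg //].
  exact: dense_in_trans Q_dense P_dense.
- by move=> [P [_]]; exact: v_i.
Qed.
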